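(* Let $G$ be a countable disconnected graph. Suppose there is an infinite sequence $(H_n)_{n<\omega}$ of pairwise distinct non-trivial connected components of $G$ such that $H_n$ embeds into $H_m$ whenever $n\le m$. Then $G$ has infinitely many pairwise non-isomorphic disconnected siblings.
   Context: Graphs are undirected and loopless. $G$ embeds into $G'$ if $G$ is isomorphic to an induced subgraph of $G'$; $G,G'$ are equimorphic if each embeds into the other; a sibling of $G$ is a graph equimorphic to $G$. A connected component is trivial if it consists of a single vertex. *)

From Stdlib Require Import Relations.

Record graph : Type := Graph {
  vert :> Type;
  adj : vert -> vert -> Prop;
  adj_sym : forall x y, adj x y -> adj y x;
  adj_irrefl : forall x, ~ adj x x
}.

Arguments adj {g} _ _.

Definition countable_graph (G : graph) : Prop :=
  exists f : G -> nat, forall x y, f x = f y -> x = y.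

Definition embeds (G G' : graph) : Prop :=
  exists f : G -> G',
    (forall x y, f x = f y -> x = y) /\
    (forall x y, adj x y <-> adj (f x) (f y)).

Definition equimorphic (G G' : graph) : Prop := embeds G G' /\ embeds G' G.

Definition sibling (G G' : graph) : Prop := equimorphic G' G.

Definition isomorphic (G G' : graph) : Prop :=
  exists (f : G -> G') (g : G' -> G),
    (forall x, g (f x) = x) /\ (forall y, f (g y) = y) /\
    (forall x y, adj x y <-> adj (f x) (f y)).

Definition conn (G : graph) : G -> G -> Prop := clos_refl_trans G (@adj G).

Definition connected (G : graph) : Prop :=
  (exists x : G, True) /\ forall x y : G, conn G x y.

Definition disconnected (G : graph) : Prop :=
  exists x y : G, ~ conn G x y.

Definition induced (G : graph) (P : G -> Prop) : graph.
Proof.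
  refine (@Graph {x : G | P x} (fun x y => adj (proj1_sig x) (proj1_sig y)) _ _).
  - intros x y; apply adj_sym.
  - intros x; apply adj_irrefl.
Defined.

Definition component (G : graph) (v : G) : graph := induced G (conn G v).

Definition nontrivial_component (G : graph) (v : G) : Prop :=
  exists w : G, conn G v w /\ w <> v.

From Stdlib Require Import Relations Classical ClassicalEpsilon ProofIrrelevance Lia List.

(* Let S_k be G with its isolated vertices deleted and k fresh isolated vertices
   added.  Using H_n -> H_m for n <= m and fixing every other component,
   S_k embeds into G: shift each H_n into H_(n+k) and send the fresh
   vertices to representatives of H_0, ..., H_(k-1), whose components the shifted
   copy avoids.  G embeds into S_k: shift each H_n into H_(2n+1) and send the
   countably many isolated vertices of G injectively to representatives of the
   even-indexed H_(2m).  Each S_k is disconnected, and S_k has exactly k isolated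
   vertices, so the S_k are pairwise non-isomorphic. *)

Lemma sig_ext {A : Type} {P : A -> Prop} (a b : {x | P x}) :
  proj1_sig a = proj1_sig b -> a = b.
Proof. apply eq_sig_hprop; intros; apply proof_irrelevance. Qed.

Lemma conn_sym (G : graph) (x y : G) : conn G x y -> conn G y x.
Proof.
  induction 1; [apply rt_step, adj_sym | apply rt_refl | eapply rt_trans]; eauto.
Qed.

Lemma conn_hom (G G' : graph) (h : G -> G') (x y : G) :
  (forall a b, adj a b -> adj (h a) (h b)) -> conn G x y -> conn G' (h x) (h y).
Proof.
  intros hom; induction 1; [apply rt_step, hom | apply rt_refl | eapply rt_trans]; eauto.
Qed.

Definition isolated (G : graph) (x : G) : Prop := forall y, ~ adj x y.

Lemma isolated_conn (G : graph) (x y : G) : isolated G x -> conn G x y -> y = x.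
Proof.
  intros iso xy; revert iso; induction xy as [x y A | x | x y z _ IHxy _ IHyz]; intro iso.
  - destruct (iso y A).
  - reflexivity.
  - specialize (IHxy iso); subst y; auto.
Qed.

Lemma nontrivial_component_not_isolated (G : graph) (x : G) :
  nontrivial_component G x -> ~ isolated G x.
Proof. intros [w [xw wx]] iso. exact (wx (isolated_conn G x w iso xw)). Qed.

Definition is_embedding {G G' : graph} (f : G -> G') : Prop :=
  (forall x y, f x = f y -> x = y) /\ (forall x y, adj x y <-> adj (f x) (f y)).

Lemma is_embedding_comp (G1 G2 G3 : graph) (f : G1 -> G2) (g : G2 -> G3) :
  is_embedding f -> is_embedding g -> is_embedding (fun x => g (f x)).
Proof.
  intros [fi fa] [gi ga]; split; [auto | intros x y; rewrite fa, ga; tauto].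
Qed.

Lemma embeds_trans (G1 G2 G3 : graph) : embeds G1 G2 -> embeds G2 G3 -> embeds G1 G3.
Proof.
  intros [f hf] [g hg]. exists (fun x => g (f x)). exact (is_embedding_comp _ _ _ f g hf hg).
Qed.

Lemma embedding_not_isolated (G G' : graph) (f : G -> G') (x : G) :
  is_embedding f -> ~ isolated G x -> ~ isolated G' (f x).
Proof. intros [_ fa] nx iso. apply nx. intros y A. exact (iso (f y) (proj1 (fa x y) A)). Qed.

Lemma is_embedding_of_components (G G' : graph) (f : G -> G') :
  (forall x y, conn G x y -> f x = f y -> x = y) ->
  (forall x y, conn G x y -> (adj x y <-> adj (f x) (f y))) ->
  (forall x y, conn G' (f x) (f y) -> conn G x y) ->
  is_embedding f.
Proof.
  intros inj_conn adj_conn reflect_conn. split.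
  - intros x y e. apply inj_conn; [apply reflect_conn; rewrite e; apply rt_refl | exact e].
  - intros x y. split; intro A.
    + apply adj_conn; [apply rt_step |]; exact A.
    + apply adj_conn; [apply reflect_conn, rt_step |]; exact A.
Qed.

Lemma val_embedding (G : graph) (P : G -> Prop) :
  is_embedding (@proj1_sig G P : induced G P -> G).
Proof. split; [apply sig_ext | intros; reflexivity]. Qed.

Lemma embeds_induced (G G' : graph) (P : G -> Prop) (f : G' -> G) :
  is_embedding f -> (forall x, P (f x)) -> embeds G' (induced G P).
Proof.
  intros [fi fa] fP. exists (fun x => exist P (f x) (fP x)). split.
  - intros x y e. apply fi. exact (f_equal (@proj1_sig _ _) e).
  - apply fa.
Qed.

Definition disjoint_union_adj (G1 G2 : graph) (p q : G1 + G2) : Prop :=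
  match p, q with
  | inl x, inl y => adj x y
  | inr x, inr y => adj x y
  | _, _ => False
  end.

Definition disjoint_union (G1 G2 : graph) : graph.
Proof.
  refine (@Graph (G1 + G2) (disjoint_union_adj G1 G2) _ _).
  - intros [x|x] [y|y]; simpl; auto using adj_sym.
  - intros [x|x]; apply adj_irrefl.
Defined.

Lemma conn_disjoint_union (G1 G2 : graph) (p q : disjoint_union G1 G2) :
  conn _ p q ->
  match p, q with
  | inl a, inl b => conn G1 a b
  | inr a, inr b => conn G2 a b
  | _, _ => False
  end.
Proof.
  induction 1 as [p q A | p | p q r _ IHpq _ IHqr].
  - destruct p, q; simpl in *; try contradiction; apply rt_step, A.
  - destruct p; apply rt_refl.
  - destruct p, q, r; simpl in *; try contradiction; eapply rt_trans; eauto.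
Qed.

Lemma inl_embedding (G1 G2 : graph) :
  is_embedding (@inl G1 G2 : G1 -> disjoint_union G1 G2).
Proof. split; [intros x y e; injection e; auto | intros; reflexivity]. Qed.

Definition sum_map {G1 G2 G : graph} (f1 : G1 -> G) (f2 : G2 -> G)
  (p : disjoint_union G1 G2) : G :=
  match p with inl a => f1 a | inr b => f2 b end.

Lemma sum_map_embedding (G1 G2 G : graph) (f1 : G1 -> G) (f2 : G2 -> G) :
  is_embedding f1 -> is_embedding f2 -> (forall a b, ~ conn G (f1 a) (f2 b)) ->
  is_embedding (sum_map f1 f2).
Proof.
  intros [i1 a1] [i2 a2] sep. split.
  - intros [a|b] [a'|b']; simpl; intro e.
    + f_equal; auto.
    + destruct (sep a b'); rewrite e; apply rt_refl.
    + destruct (sep a' b); rewrite e; apply rt_refl.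
    + f_equal; auto.
  - intros [a|b] [a'|b']; simpl.
    + apply a1.
    + split; [contradiction | intro A; apply (sep a b'), rt_step, A].
    + split; [contradiction | intro A; apply (sep a' b), rt_step, adj_sym, A].
    + apply a2.
Qed.

Definition split_by (G : graph) (P : G -> Prop) (x : G) :
  disjoint_union (induced G P) (induced G (fun y => ~ P y)) :=
  match excluded_middle_informative (P x) with
  | left p => inl (exist _ x p)
  | right np => inr (exist _ x np)
  end.

Lemma split_by_embedding (G : graph) (P : G -> Prop) :
  (forall x y, adj x y -> (P x <-> P y)) -> is_embedding (split_by G P).
Proof.
  intros P_adj.
  assert (retract : forall x, @sum_map (induced G P) (induced G (fun y => ~ P y)) G
                                   (@proj1_sig _ _) (@proj1_sig _ _) (split_by G P x) = x).
  { intro x. unfold split_by. destruct excluded_middle_informative; reflexivity. }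
  split.
  - intros x y e. rewrite <- (retract x), <- (retract y), e. reflexivity.
  - intros x y. unfold split_by.
    do 2 destruct excluded_middle_informative; simpl; try reflexivity;
      split; try contradiction; intro A; apply P_adj in A; tauto.
Qed.

Definition edgeless (T : Type) : graph :=
  @Graph T (fun _ _ => False) (fun _ _ A => A) (fun _ A => A).

Definition replace_isolated (G : graph) (k : nat) : graph :=
  disjoint_union (induced G (fun x => ~ isolated G x)) (edgeless {m | m < k}).

Definition embedding_on (G : graph) (P Q : G -> Prop) (f : G -> G) : Prop :=
  (forall x, P x -> Q (f x)) /\
  (forall x y, P x -> P y -> f x = f y -> x = y) /\
  (forall x y, P x -> P y -> (adj x y <-> adj (f x) (f y))).

Lemma embedding_on_of_induced (G : graph) (P Q : G -> Prop) :
  embeds (induced G P) (induced G Q) -> exists f : G -> G, embedding_on G P Q f.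
Proof.
  intros [g [gi ga]].
  exists (fun x => match excluded_middle_informative (P x) with
                  | left p => proj1_sig (g (exist P x p))
                  | right _ => x
                  end).
  split; [|split].
  - intros x px. destruct excluded_middle_informative; [exact (proj2_sig _) | contradiction].
  - intros x y px py. do 2 destruct excluded_middle_informative; try contradiction.
    intro e. apply sig_ext, gi in e. exact (f_equal (@proj1_sig _ _) e).
  - intros x y px py. do 2 destruct excluded_middle_informative; try contradiction.
    exact (ga (exist P x _) (exist P y _)).
Qed.

Lemma component_embeddings (G : graph) (v : nat -> G) :
  (forall n m, n <= m -> embeds (component G (v n)) (component G (v m))) ->
  exists E : nat -> nat -> G -> G,
    forall n m, n <= m -> embedding_on G (conn G (v n)) (conn G (v m)) (E n m).
Proof.
  intros emb.
  apply (choice (fun n En => forall m, n <= m ->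
                   embedding_on G (conn G (v n)) (conn G (v m)) (En m))); intro n.
  apply (choice (fun m f => n <= m -> embedding_on G (conn G (v n)) (conn G (v m)) f)); intro m.
  destruct (classic (n <= m)) as [nm | nm].
  - destruct (embedding_on_of_induced _ _ _ (emb n m nm)) as [f hf]. exists f; auto.
  - exists (fun x => x). contradiction.
Qed.

Section ComponentShift.

Variables (G : graph) (v : nat -> G) (E : nat -> nat -> G -> G).
Hypothesis v_sep : forall n m, n <> m -> ~ conn G (v n) (v m).
Hypothesis E_emb :
  forall n m, n <= m -> embedding_on G (conn G (v n)) (conn G (v m)) (E n m).

Lemma v_component_unique n m x : conn G (v n) x -> conn G (v m) x -> n = m.
Proof.
  intros hn hm. apply NNPP; intro nm.
  apply (v_sep n m nm). eapply rt_trans; [exact hn | apply conn_sym, hm].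
Qed.

Lemma v_embedding (H : graph) (h : H -> nat) :
  (forall a b : H, ~ adj a b) -> (forall a b, h a = h b -> a = b) ->
  is_embedding (fun a => v (h a)).
Proof.
  intros no_edge h_inj. split.
  - intros a b e. apply h_inj, (v_component_unique _ _ (v (h b))); [rewrite e|]; apply rt_refl.
  - intros a b. split; [intro A; destruct (no_edge a b A) | intro A; exfalso].
    assert (e : h a = h b)
      by (apply (v_component_unique _ _ (v (h b))); [apply rt_step, A | apply rt_refl]).
    rewrite e in A. exact (adj_irrefl _ _ A).
Qed.

Definition comp_index (x : G) : option nat :=
  match excluded_middle_informative (exists n, conn G (v n) x) with
  | left h => Some (proj1_sig (constructive_indefinite_description _ h))
  | right _ => None
  end.

Lemma comp_index_Some x n : comp_index x = Some n <-> conn G (v n) x.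
Proof.
  unfold comp_index. destruct excluded_middle_informative as [h | h].
  - destruct constructive_indefinite_description as [m hm]; simpl. split.
    + intro e; injection e as <-; exact hm.
    + intro hn; f_equal; exact (v_component_unique _ _ _ hm hn).
  - split; [discriminate | intro hn; destruct (h (ex_intro _ n hn))].
Qed.

Lemma comp_index_conn x y : conn G x y -> comp_index x = comp_index y.
Proof.
  intro xy. destruct (comp_index x) as [n|] eqn:ex, (comp_index y) as [m|] eqn:ey.
  - apply comp_index_Some in ex. rewrite <- ey. symmetry. apply comp_index_Some.
    eapply rt_trans; eauto.
  - rewrite <- ey. symmetry. apply comp_index_Some.
    eapply rt_trans; [apply comp_index_Some, ex | exact xy].
  - rewrite <- ex. apply comp_index_Some.
    eapply rt_trans; [apply comp_index_Some, ey | apply conn_sym, xy].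
  - reflexivity.
Qed.

Variable s : nat -> nat.
Hypothesis s_ge : forall n, n <= s n.
Hypothesis s_inj : forall n m, s n = s m -> n = m.

Definition shift (x : G) : G :=
  match comp_index x with Some n => E n (s n) x | None => x end.

Lemma comp_index_shift x : comp_index (shift x) = option_map s (comp_index x).
Proof.
  unfold shift. destruct (comp_index x) as [n|] eqn:ex; simpl; [|exact ex].
  apply comp_index_Some, (E_emb n (s n) (s_ge n)), comp_index_Some, ex.
Qed.

Lemma conn_shift_range m x : conn G (v m) (shift x) -> exists n, m = s n.
Proof.
  intro hm. apply comp_index_Some in hm. rewrite comp_index_shift in hm.
  destruct (comp_index x) as [n|]; simpl in hm; [|discriminate].
  injection hm; eauto.
Qed.

Lemma shift_embedding : is_embedding shift.
Proof.
  apply is_embedding_of_components.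
  1, 2: intros x y xy; unfold shift; rewrite <- (comp_index_conn x y xy);
    destruct (comp_index x) as [n|] eqn:ex; [|tauto];
    assert (hx : conn G (v n) x) by apply comp_index_Some, ex;
    apply (E_emb n (s n) (s_ge n)); [exact hx | eapply rt_trans; eauto].
  - intros x y C. assert (I := comp_index_conn _ _ C). rewrite !comp_index_shift in I.
    destruct (comp_index x) as [n|] eqn:ex, (comp_index y) as [m|] eqn:ey;
      simpl in I; try discriminate.
    + injection I as e. apply s_inj in e. subst m.
      eapply rt_trans; [apply conn_sym, comp_index_Some, ex | apply comp_index_Some, ey].
    + unfold shift in C. rewrite ex, ey in C. exact C.
Qed.

End ComponentShift.

Section ReplaceIsolated.

Variables (G : graph) (v : nat -> G) (E : nat -> nat -> G -> G).
Hypothesis v_sep : forall n m, n <> m -> ~ conn G (v n) (v m).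
Hypothesis E_emb :
  forall n m, n <= m -> embedding_on G (conn G (v n)) (conn G (v m)) (E n m).

Lemma replace_isolated_embeds k : embeds (replace_isolated G k) G.
Proof.
  pose (s n := n + k).
  assert (s_ge : forall n, n <= s n) by (intro; unfold s; lia).
  assert (s_inj : forall n m, s n = s m -> n = m) by (unfold s; intros; lia).
  exists (sum_map (fun a : induced G (fun x => ~ isolated G x) => shift G v E s (proj1_sig a))
                 (fun t : edgeless {m | m < k} => v (proj1_sig t))).
  apply sum_map_embedding.
  - apply is_embedding_comp; [apply val_embedding |].
    exact (shift_embedding G v E v_sep E_emb s s_ge s_inj).
  - apply v_embedding; auto. intros a b e; apply sig_ext, e.
  - intros a [i lt_i_k] C.
    destruct (conn_shift_range G v E v_sep E_emb s s_ge _ _ (conn_sym _ _ _ C)) as [n e].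
    unfold s in e. simpl in e. lia.
Qed.

Lemma embeds_replace_isolated (c : G -> nat) k :
  (forall x y, c x = c y -> x = y) ->
  (forall n, nontrivial_component G (v n)) ->
  embeds G (replace_isolated G k).
Proof.
  intros c_inj v_nontrivial.
  pose (s n := S (2 * n)).
  assert (s_ge : forall n, n <= s n) by (intro; unfold s; lia).
  assert (s_inj : forall n m, s n = s m -> n = m) by (unfold s; intros; lia).
  pose (f := sum_map (fun b : induced G (isolated G) => v (2 * c (proj1_sig b)))
                     (fun a : induced G (fun x => ~ isolated G x) => shift G v E s (proj1_sig a))).
  pose proof (shift_embedding G v E v_sep E_emb s s_ge s_inj) as shift_emb.
  apply (embeds_trans _ (induced G (fun x => ~ isolated G x))).
  - apply (embeds_induced _ _ _ (fun x => f (split_by G (isolated G) x))).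
    + apply is_embedding_comp; [apply split_by_embedding | apply sum_map_embedding].
      * intros x y A. split; intro iso; [destruct (iso y A) | destruct (iso x (adj_sym _ _ _ A))].
      * apply v_embedding; auto.
        -- intros a b A. exact (proj2_sig a _ A).
        -- intros a b e. apply sig_ext, c_inj. lia.
      * apply is_embedding_comp; [apply val_embedding | exact shift_emb].
      * intros b a C.
        destruct (conn_shift_range G v E v_sep E_emb s s_ge _ _ C) as [n e].
        unfold s in e. lia.
    + intro x. destruct (split_by G (isolated G) x) as [b|a]; simpl.
      * apply nontrivial_component_not_isolated, v_nontrivial.
      * exact (embedding_not_isolated _ _ _ _ shift_emb (proj2_sig a)).
  - exists inl. apply inl_embedding.
Qed.

End ReplaceIsolated.

Lemma replace_isolated_disconnected (G : graph) k (x y : G) :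
  ~ isolated G x -> ~ isolated G y -> ~ conn G x y -> disconnected (replace_isolated G k).
Proof.
  intros nx ny xy. exists (inl (exist _ x nx)), (inl (exist _ y ny)). intro C.
  apply xy, (conn_hom (induced G (fun z => ~ isolated G z)) G (@proj1_sig _ _)
                      (exist _ x nx) (exist _ y ny)).
  - intros a b A. exact A.
  - exact (conn_disjoint_union _ _ _ _ C).
Qed.

Lemma isolated_replace_isolated (G : graph) k (p : replace_isolated G k) :
  isolated _ p -> exists t, p = inr t.
Proof.
  destruct p as [[x nx] | t]; [intro iso; exfalso | eauto].
  apply nx. intros y A.
  exact (iso (inl (exist _ y (fun iy => iy x (adj_sym _ _ _ A)))) A).
Qed.

Lemma isomorphic_sym (G G' : graph) : isomorphic G G' -> isomorphic G' G.
Proof.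
  intros [f [g [gf [fg fa]]]]. exists g, f. split; [exact fg | split; [exact gf |]].
  intros x y. rewrite fa, !fg. reflexivity.
Qed.

Lemma isomorphism_isolated (G G' : graph) (f : G -> G') (g : G' -> G) :
  (forall y, f (g y) = y) -> (forall x y, adj x y <-> adj (f x) (f y)) ->
  forall x, isolated G x -> isolated G' (f x).
Proof. intros fg fa x iso y A. rewrite <- (fg y) in A. exact (iso (g y) (proj2 (fa _ _) A)). Qed.

Lemma injection_lt_le (k1 k2 : nat) (h : {m | m < k1} -> {m | m < k2}) :
  (forall a b, h a = h b -> a = b) -> k1 <= k2.
Proof.
  intro h_inj.
  pose (phi m := match excluded_middle_informative (m < k1) with
                 | left lt => proj1_sig (h (exist _ m lt))
                 | right _ => 0
                 end).
  rewrite <- (length_seq k1 0), <- (length_seq k2 0), <- (length_map phi).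
  apply NoDup_incl_length.
  - apply NoDup_map_NoDup_ForallPairs; [| apply seq_NoDup].
    intros a b ha hb. apply in_seq in ha, hb. unfold phi.
    do 2 destruct excluded_middle_informative; try lia.
    intro e. apply sig_ext, h_inj in e. exact (f_equal (@proj1_sig _ _) e).
  - intros y hy. apply in_map_iff in hy as [m [<- hm]]. apply in_seq in hm. apply in_seq.
    unfold phi. destruct excluded_middle_informative as [lt|]; [|lia].
    destruct (h (exist _ m lt)) as [j lt_j_k2]; simpl. lia.
Qed.

Lemma replace_isolated_iso_le (G : graph) i j :
  isomorphic (replace_isolated G i) (replace_isolated G j) -> i <= j.
Proof.
  intros [f [g [gf [fg fa]]]].
  assert (img : forall t, exists t', f (inr t) = inr t').
  { intro t. apply isolated_replace_isolated, (isomorphism_isolated _ _ f g fg fa).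
    intros [a|b] A; exact A. }
  apply choice in img as [h hh].
  apply (injection_lt_le i j h). intros a b e.
  assert (ab : (inr a : replace_isolated G i) = inr b)
    by (rewrite <- (gf (inr a)), <- (gf (inr b)), hh, hh, e; reflexivity).
  injection ab; auto.
Qed.

Theorem lemma2p3 (G : graph) (v : nat -> vert G) :
  countable_graph G ->
  disconnected G ->
  (forall n m, n <> m -> ~ conn G (v n) (v m)) ->
  (forall n, nontrivial_component G (v n)) ->
  (forall n m, n <= m -> embeds (component G (v n)) (component G (v m))) ->
  exists S : nat -> graph,
    (forall i, sibling G (S i) /\ disconnected (S i)) /\
    (forall i j, i <> j -> ~ isomorphic (S i) (S j)).
Proof.
  (* [disconnected G] already follows from the other hypotheses. *)
  intros [c c_inj] _ v_sep v_nontrivial v_emb.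
  destruct (component_embeddings G v v_emb) as [E E_emb].
  exists (replace_isolated G). split.
  - intro k. split; [split|].
    + exact (replace_isolated_embeds G v E v_sep E_emb k).
    + exact (embeds_replace_isolated G v E v_sep E_emb c k c_inj v_nontrivial).
    + apply (replace_isolated_disconnected G k (v 0) (v 1));
        [apply nontrivial_component_not_isolated, v_nontrivial ..|].
      apply v_sep. lia.
  - intros i j ij iso.
    pose proof (replace_isolated_iso_le G i j iso).
    pose proof (replace_isolated_iso_le G j i (isomorphic_sym _ _ iso)).
    lia.
Qed.
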